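(* Let $\mathbb{K}$ be a non-Archimedean valued field, $G$ a normed $\mathbb{K}$-amenable totally disconnected locally compact group, and $E$ a dual normed $\mathbb{K}[G]$-module. Then $H^n_{lucb}(G, E) = 0$ for all $n \geq 1$.
   Context: A non-Archimedean valued field is a field with an absolute value satisfying the ultrametric inequality. A normed $\mathbb{K}$-vector space has a norm with $\|x\|=0$ iff $x=0$, $\|x+y\|\le\max\{\|x\|,\|y\|\}$, $\|\alpha x\|=|\alpha|_\mathbb{K}\|x\|$. A normed $\mathbb{K}[G]$-module is a normed $\mathbb{K}$-vector space with an action of $G$ by linear isometries (no continuity assumed). Duals carry the operator norm $\|T\|_{op}=\inf\{C\ge0:|Tx|_\mathbb{K}\le C\|x\|\}$ and the dual action $(g\cdot\lambda)(x)=\lambda(g^{-1}x)$; a dual normed $\mathbb{K}[G]$-module is one isometrically $G$-isomorphic to the dual of a normed $\mathbb{K}[G]$-module. A map $f:G^{n+1}\to E$ is left uniformly continuous if for every $\varepsilon>0$ there is a neighbourhood $U$ of the identity in $G^{n+1}$ with $\|f(x)-f(ux)\|<\varepsilon$ for all $x\in G^{n+1}$, $u\in U$. $LUC^n_b(G,E)$ is the space of bounded left uniformly continuous maps $G^{n+1}\to E$, with action $(g\cdot f)(g_0,\dots,g_n)=g\cdot f(g^{-1}g_0,\dots,g^{-1}g_n)$ and coboundary $\delta^nf(g_0,\dots,g_{n+1})=\sum_{i=0}^{n+1}(-1)^if(g_0,\dots,\widehat{g_i},\dots,g_{n+1})$; $H^\bullet_{lucb}(G,E)$ is the cohomology of the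 complex of $G$-invariants $LUC^\bullet_b(G,E)^G$. $C_b(G,\mathbb{K})$: continuous bounded functions $G\to\mathbb{K}$ with sup norm, $(g\cdot f)(x)=f(g^{-1}x)$. $G$ is normed $\mathbb{K}$-amenable if there exists a bounded linear map $m:C_b(G,\mathbb{K})\to\mathbb{K}$ with $m(\mathbbm{1}_G)=1$ and $m(g\cdot f)=m(f)$ for all $g,f$. *)

From HB Require Import structures.
From mathcomp Require Import all_boot all_order all_algebra.
From mathcomp Require Import all_classical all_reals all_analysis.
From mathcomp Require Import monoid.

Set Implicit Arguments.
Unset Strict Implicit.
Unset Printing Implicit Defensive.

Import Order.TTheory GRing.Theory Num.Theory.
Local Open Scope classical_set_scope.
Local Open Scope ring_scope.

(* A (possibly non-commutative) group carrying a topology; the compatibility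
   axioms (continuity of multiplication and inversion) are the predicate
   [topological_group] below. *)
#[short(type="topGroupType")]
HB.structure Definition TopGroup := {G of Group G & Topological G}.

Definition topological_group (G : topGroupType) : Prop :=
  continuous (fun p : G * G => (p.1 * p.2)%g) /\
  continuous (fun x : G => (x^-1)%g).

Definition nonarch_abs (R : realType) (K : fieldType) (abs : K -> R) : Prop :=
  [/\ forall x, 0 <= abs x,
      forall x, abs x = 0 <-> x = 0,
      forall x y, abs (x * y) = abs x * abs y &
      forall x y, abs (x + y) <= Num.max (abs x) (abs y)].

Definition normed_space (R : realType) (K : fieldType) (abs : K -> R)
    (V : lmodType K) (nV : V -> R) : Prop :=
  [/\ forall x, nV x = 0 <-> x = 0,
      forall x y, nV (x + y) <= Num.max (nV x) (nV y) &
      forall (a : K) x, nV (a *: x) = abs a * nV x].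

Definition normed_module (R : realType) (K : fieldType) (abs : K -> R)
    (G : topGroupType) (V : lmodType K) (nV : V -> R) (act : G -> V -> V) : Prop :=
  [/\ normed_space abs nV,
      forall x, act 1%g x = x,
      forall g h x, act (g * h)%g x = act g (act h x),
      forall g (a : K) x y, act g (a *: x + y) = a *: act g x + act g y &
      forall g x, nV (act g x) = nV x].

Definition lin_functional (K : fieldType) (V : lmodType K) (l : V -> K) : Prop :=
  forall (a : K) x y, l (a *: x + y) = a * l x + l y.

Definition bounded_functional (R : realType) (K : fieldType) (abs : K -> R)
    (V : lmodType K) (nV : V -> R) (l : V -> K) : Prop :=
  exists C : R, forall x, abs (l x) <= C * nV x.

Definition opnorm (R : realType) (K : fieldType) (abs : K -> R)
    (V : lmodType K) (nV : V -> R) (l : V -> K) : R :=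
  inf [set C : R | 0 <= C /\ forall x, abs (l x) <= C * nV x].

(* E is a dual normed K[G]-module: there is a normed K[G]-module V and an
   isometric G-equivariant linear isomorphism Phi from E onto the dual of V
   (bounded linear functionals on V, operator norm, dual action). *)
Definition dual_normed_module (R : realType) (K : fieldType) (abs : K -> R)
    (G : topGroupType) (E : lmodType K) (nE : E -> R) (actE : G -> E -> E) : Prop :=
  exists (V : lmodType K) (nV : V -> R) (actV : G -> V -> V) (Phi : E -> V -> K),
    normed_module abs nV actV /\
    (forall e, lin_functional (Phi e) /\ bounded_functional abs nV (Phi e)) /\
    (forall (a : K) e e', Phi (a *: e + e') = (fun x => a * Phi e x + Phi e' x)) /\
    injective Phi /\
    (forall l : V -> K, lin_functional l -> bounded_functional abs nV l ->
       exists e, Phi e = l) /\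
    (forall e, nE e = opnorm abs nV (Phi e)) /\
    (forall g e, Phi (actE g e) = (fun x => Phi e (actV (g^-1)%g x))).

Definition cont_K (R : realType) (K : fieldType) (abs : K -> R)
    (G : topGroupType) (f : G -> K) : Prop :=
  forall (x : G) (eps : R), 0 < eps ->
    exists U : set G, nbhs x U /\ forall y, U y -> abs (f y - f x) < eps.

Definition Cb (R : realType) (K : fieldType) (abs : K -> R)
    (G : topGroupType) (f : G -> K) : Prop :=
  cont_K abs f /\ exists B : R, forall x, abs (f x) <= B.

Definition supnorm (R : realType) (K : fieldType) (abs : K -> R)
    (G : topGroupType) (f : G -> K) : R :=
  sup (range (fun x => abs (f x))).

(* G is normed K-amenable: a bounded linear map m : C_b(G,K) -> K with
   m(1_G) = 1 and m(g . f) = m(f), where (g . f)(x) = f(g^-1 x).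
   (m is given as a total map; only its values on C_b(G,K) matter.) *)
Definition normed_amenable (R : realType) (K : fieldType) (abs : K -> R)
    (G : topGroupType) : Prop :=
  exists m : (G -> K) -> K,
    [/\ forall (a : K) f h, Cb abs f -> Cb abs h ->
          m (fun x => a * f x + h x) = a * m f + m h,
        exists C : R, forall f, Cb abs f -> abs (m f) <= C * supnorm abs f,
        m (fun _ => 1) = 1 &
        forall (g : G) f, Cb abs f -> m (fun x => f (g^-1 * x)%g) = m f].

(* LUC^n_b(G,E): maps G^{n+1} -> E (G^{n+1} = 'I_n.+1 -> G) that are bounded
   and left uniformly continuous; neighbourhoods of the identity of G^{n+1}
   are taken for the product topology (they contain a product of
   neighbourhoods of 1 in G). *)
Definition lucb (R : realType) (K : fieldType) (G : topGroupType)
    (E : lmodType K) (nE : E -> R) (n : nat) (f : ('I_n.+1 -> G) -> E) : Prop :=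
  (exists M : R, forall x, nE (f x) <= M) /\
  forall eps : R, 0 < eps ->
    exists U : 'I_n.+1 -> set G, (forall i, nbhs (1%g : G) (U i)) /\
      forall (x u : 'I_n.+1 -> G), (forall i, U i (u i)) ->
        nE (f x - f (fun i => (u i * x i)%g)) < eps.

(* G-invariance for (g . f)(g_0..g_n) = g . f(g^-1 g_0, ..., g^-1 g_n). *)
Definition G_invariant (K : fieldType) (G : topGroupType) (E : lmodType K)
    (act : G -> E -> E) (n : nat) (f : ('I_n.+1 -> G) -> E) : Prop :=
  forall (g : G) x, act g (f (fun i => (g^-1 * x i)%g)) = f x.

Definition coboundary (K : fieldType) (G : topGroupType) (E : lmodType K)
    (n : nat) (f : ('I_n.+1 -> G) -> E) : ('I_n.+2 -> G) -> E :=
  fun x => \sum_(i < n.+2) ((-1) ^+ i : K) *: f (fun j => x (lift i j)).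

(* H^{m+1}_lucb(G, E) = 0: every G-invariant LUC-bounded (m+1)-cocycle is the
   coboundary of a G-invariant LUC-bounded m-cochain. *)
Definition Hlucb_succ_vanishes (R : realType) (K : fieldType) (G : topGroupType)
    (E : lmodType K) (nE : E -> R) (act : G -> E -> E) (m : nat) : Prop :=
  forall f : ('I_m.+2 -> G) -> E,
    lucb nE f -> G_invariant act f -> coboundary f = (fun _ => 0) ->
    exists h : ('I_m.+1 -> G) -> E,
      [/\ lucb nE h, G_invariant act h & coboundary h = f].

From HB Require Import structures.
From mathcomp Require Import all_boot all_order all_algebra.
From mathcomp Require Import all_classical all_reals all_analysis.
From mathcomp Require Import monoid.

(* Average the cone construction with the invariant mean [m].  Since [E] is
   the dual of a normed K[G]-module [V], a G-invariant LUC cocycle [f] of degree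
   n+1 yields, for every [z] in G^(n+1), the bounded functional
   [v |-> m (g |-> <f (g, z), v>)] on [V], i.e. an element [h z] of [E].  Left
   uniform continuity of [f] makes each slice [g |-> <f (g, z), v>] continuous,
   so [m] applies, and [h] inherits boundedness and left uniform continuity.
   The cocycle identity at [(g, y)] writes [f y] as the alternating sum of the
   [f (g, y without its i-th entry)]; averaging over [g] gives [coboundary h = f],
   and invariance of [m] transfers the G-invariance of [f] to [h]. *)

Set Implicit Arguments.
Unset Strict Implicit.
Unset Printing Implicit Defensive.
Import Order.TTheory GRing.Theory Num.Theory.
Local Open Scope classical_set_scope.
Local Open Scope ring_scope.

Section DivSucc.
Variable R : realFieldType.
Implicit Types A d eps : R.

Lemma div_succ_gt0 A eps : 0 <= A -> 0 < eps -> 0 < eps / (A + 1).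
Proof. by move=> A_ge0 eps_gt0; rewrite divr_gt0 // ltr_wpDl. Qed.

Lemma mulr_lt_div_succ A d eps :
  0 <= A -> 0 < eps -> d <= eps / (A + 1) -> A * d < eps.
Proof.
move=> A_ge0 eps_gt0 d_le; have A1_gt0 : 0 < A + 1 by rewrite ltr_wpDl.
apply: le_lt_trans (ler_wpM2l A_ge0 d_le) _.
by rewrite mulrA ltr_pdivrMr // mulrDr mulr1 mulrC ltrDl.
Qed.

End DivSucc.

Section NonArchimedeanAbs.
Variables (R : realType) (K : fieldType) (abs : K -> R).
Hypothesis abs_nonarch : nonarch_abs abs.

Lemma nonarch_abs0 : abs 0 = 0.
Proof. by case: abs_nonarch => _ abs_eq0 _ _; apply/abs_eq0. Qed.

Lemma nonarch_abs1 : abs 1 = 1.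
Proof.
case: abs_nonarch => _ abs_eq0 absM _.
have abs1_neq0 : abs 1 != 0 by apply/eqP => /abs_eq0/eqP; rewrite oner_eq0.
by apply: (mulfI abs1_neq0); rewrite mulr1 -absM mulr1.
Qed.

Lemma nonarch_absN x : abs (- x) = abs x.
Proof.
case: abs_nonarch => abs_ge0 _ absM _.
have absN1 : abs (-1) = 1.
  have /eqP := absM (-1) (-1); rewrite mulrNN mulr1 nonarch_abs1 eq_sym.
  rewrite -expr2 sqrf_eq1 => /orP[/eqP //|/eqP absN1].
  by have := abs_ge0 (-1); rewrite absN1 ler0N1.
by rewrite -mulN1r absM absN1 mul1r.
Qed.

Lemma nonarch_absB x y : abs (x - y) = abs (y - x).
Proof. by rewrite -opprB nonarch_absN. Qed.

Lemma normed_space_ge0 (V : lmodType K) (nV : V -> R) :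
  normed_space abs nV -> forall x, 0 <= nV x.
Proof.
case=> nV_eq0 nV_max nVZ x.
have := nV_max x ((-1) *: x).
by rewrite nVZ nonarch_absN nonarch_abs1 mul1r maxxx scaleN1r subrr (nV_eq0 0).2.
Qed.

Lemma Cb_cst (G : topGroupType) (c : K) : Cb abs (fun _ : G => c).
Proof.
split; last by exists (abs c).
move=> x eps eps_gt0; exists setT; split; first exact: filterT.
by move=> y _; rewrite subrr nonarch_abs0.
Qed.

Lemma Cb_lin (G : topGroupType) (a : K) (f h : G -> K) :
  Cb abs f -> Cb abs h -> Cb abs (fun x => a * f x + h x).
Proof.
case: abs_nonarch => abs_ge0 _ absM abs_max.
move=> [f_cont [Bf f_le]] [h_cont [Bh h_le]]; split; last first.
  exists (Num.max (abs a * Bf) Bh) => x.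
  by apply: le_trans (abs_max _ _) _; rewrite absM le_max2 // ler_wpM2l.
move=> x eps eps_gt0.
have [Uf [Uf_nbhs f_near]] := f_cont x _ (div_succ_gt0 (abs_ge0 a) eps_gt0).
have [Uh [Uh_nbhs h_near]] := h_cont x eps eps_gt0.
exists (Uf `&` Uh); split; first exact: filterI.
move=> y [Uf_y Uh_y].
have -> : a * f y + h y - (a * f x + h x) = a * (f y - f x) + (h y - h x).
  by rewrite mulrBr opprD !addrA; congr (_ + _); rewrite addrAC.
apply: le_lt_trans (abs_max _ _) _; rewrite gt_max absM h_near // andbT.
by apply: mulr_lt_div_succ => //; exact/ltW/f_near.
Qed.

Lemma Cb_sub (G : topGroupType) (f h : G -> K) :
  Cb abs f -> Cb abs h -> Cb abs (fun x => f x - h x).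
Proof.
move=> f_Cb h_Cb; have := Cb_lin (-1) h_Cb f_Cb.
by under eq_fun do rewrite mulN1r addrC.
Qed.

Lemma Cb_sum (G : topGroupType) k (c : 'I_k -> K) (F : 'I_k -> G -> K) :
  (forall i, Cb abs (F i)) -> Cb abs (fun g => \sum_(i < k) c i * F i g).
Proof.
elim: k c F => [|k IHk] c F F_Cb.
  by under eq_fun do rewrite big_ord0; exact: Cb_cst.
by under eq_fun do rewrite big_ord_recl; exact/Cb_lin/IHk.
Qed.

Lemma supnorm_le (G : topGroupType) (f : G -> K) (B : R) :
  (forall g, abs (f g) <= B) -> supnorm abs f <= B.
Proof.
by move=> f_le; apply: ge_sup; [exists (abs (f 1%g)), 1%g | move=> _ [g _ <-]].
Qed.

Lemma supnorm_ge0 (G : topGroupType) (f : G -> K) (B : R) :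
  (forall g, abs (f g) <= B) -> 0 <= supnorm abs f.
Proof.
case: abs_nonarch => abs_ge0 _ _ _ f_le.
apply: le_trans (abs_ge0 (f 1%g)) _; apply: sup_upper_bound; last by exists 1%g.
by split; [exists (abs (f 1%g)), 1%g | exists B => _ [g _ <-]].
Qed.

Lemma opnorm_le (V : lmodType K) (nV : V -> R) (l : V -> K) (c : R) :
  0 <= c -> (forall x, abs (l x) <= c * nV x) -> opnorm abs nV l <= c.
Proof. by move=> c_ge0 l_le; apply: ge_inf; [exists 0 => ? [] | split]. Qed.

Lemma abs_le_opnorm (V : lmodType K) (nV : V -> R) (l : V -> K) :
  normed_space abs nV -> bounded_functional abs nV l ->
  forall x, abs (l x) <= opnorm abs nV l * nV x.
Proof.
move=> nV_space [c l_le] x; have nV_ge0 := normed_space_ge0 nV_space.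
have [nx_eq0|nx_neq0] := eqVneq (nV x) 0.
  by have := l_le x; rewrite nx_eq0 !mulr0.
have nx_gt0 : 0 < nV x by rewrite lt_def nx_neq0 nV_ge0.
rewrite -ler_pdivrMr //; apply: lb_le_inf; last first.
  by move=> d [_ l_le_d]; rewrite ler_pdivrMr.
exists (Num.max c 0); split; first by rewrite le_max lexx orbT.
by move=> y; apply: le_trans (l_le y) _; rewrite ler_wpM2r // le_max lexx.
Qed.

End NonArchimedeanAbs.

Section InvariantMean.
Variables (R : realType) (K : fieldType) (abs : K -> R) (G : topGroupType).
Variable m : (G -> K) -> K.
Hypothesis abs_nonarch : nonarch_abs abs.
Hypothesis m_lin : forall (a : K) f h, Cb abs f -> Cb abs h ->
  m (fun x => a * f x + h x) = a * m f + m h.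

Lemma mean0 : m (fun _ => 0) = 0.
Proof.
have := m_lin (-1) (Cb_cst abs_nonarch G 0) (Cb_cst abs_nonarch G 0).
by rewrite mulr0 addr0 mulN1r addNr.
Qed.

Lemma meanB f h : Cb abs f -> Cb abs h -> m (fun x => f x - h x) = m f - m h.
Proof.
move=> f_Cb h_Cb; have := m_lin (-1) h_Cb f_Cb; rewrite mulN1r addrC => <-.
by under [in RHS]eq_fun do rewrite mulN1r addrC.
Qed.

Lemma mean_sum k (c : 'I_k -> K) (F : 'I_k -> G -> K) :
  (forall i, Cb abs (F i)) ->
  m (fun g => \sum_(i < k) c i * F i g) = \sum_(i < k) c i * m (F i).
Proof.
elim: k c F => [|k IHk] c F F_Cb.
  by under eq_fun do rewrite big_ord0; rewrite big_ord0 mean0.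
under eq_fun do rewrite big_ord_recl.
by rewrite m_lin ?IHk ?big_ord_recl //; exact: Cb_sum.
Qed.

Hypothesis m1 : m (fun _ => 1) = 1.

Lemma mean_cst c : m (fun _ => c) = c.
Proof.
have := m_lin c (Cb_cst abs_nonarch G 1) (Cb_cst abs_nonarch G 0).
by rewrite mulr1 addr0 m1 mean0 mulr1 addr0.
Qed.

Variable C : R.
Hypothesis m_bounded : forall f, Cb abs f -> abs (m f) <= C * supnorm abs f.

Lemma mean_bound_ge0 : 0 <= C.
Proof.
have one_le : forall g : G, abs 1 <= 1 by move=> g; rewrite (nonarch_abs1 abs_nonarch).
rewrite leNgt; apply/negP => C_lt0.
have := m_bounded (Cb_cst abs_nonarch G 1); rewrite m1 (nonarch_abs1 abs_nonarch).
apply/negP; rewrite -ltNge; apply: le_lt_trans ltr01.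
by rewrite nmulr_rle0 // (supnorm_ge0 abs_nonarch one_le).
Qed.

Lemma mean_le f B : Cb abs f -> (forall g, abs (f g) <= B) -> abs (m f) <= C * B.
Proof.
move=> f_Cb f_le; apply: le_trans (m_bounded f_Cb) _.
by rewrite ler_wpM2l ?mean_bound_ge0 ?supnorm_le.
Qed.

End InvariantMean.

Section Prepend.
Variables (T : Type) (n : nat).

Definition prepend (a : T) (z : 'I_n -> T) : 'I_n.+1 -> T :=
  fun i => if unlift ord0 i is Some j then z j else a.

Lemma prepend0 a z : prepend a z ord0 = a.
Proof. by rewrite /prepend unlift_none. Qed.

Lemma prependS a z j : prepend a z (lift ord0 j) = z j.
Proof. by rewrite /prepend liftK. Qed.

Lemma prepend_tail a z : (fun j => prepend a z (lift ord0 j)) = z.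
Proof. by apply: funext => j; rewrite prependS. Qed.

Lemma forall_prepend (P : 'I_n.+1 -> T -> Prop) a z :
  P ord0 a -> (forall j, P (lift ord0 j) (z j)) -> forall i, P i (prepend a z i).
Proof.
by move=> Pa Pz i; case: (unliftP ord0 i) => [j ->|->]; rewrite ?prependS ?prepend0.
Qed.

Lemma prepend_map (op : T -> T) a z :
  (fun i => op (prepend a z i)) = prepend (op a) (fun j => op (z j)).
Proof. by apply: funext => i; rewrite /prepend; case: (unlift ord0 i). Qed.

Lemma prepend_map2 (op : T -> T -> T) a b y z :
  (fun i => op (prepend a y i) (prepend b z i)) =
  prepend (op a b) (fun j => op (y j) (z j)).
Proof. by apply: funext => i; rewrite /prepend; case: (unlift ord0 i). Qed.

End Prepend.

Lemma prepend_face (T : Type) n a (y : 'I_n.+1 -> T) (k : 'I_n.+1) :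
  (fun j => prepend a y (lift (lift ord0 k) j)) = prepend a (fun j => y (lift k j)).
Proof.
apply: funext => j; case: (unliftP ord0 j) => [j' ->|->].
  have -> : lift (lift ord0 k) (lift ord0 j') = lift ord0 (lift k j').
    by apply/val_inj; rewrite /= /bump /= !add1n ltnS; case: (k <= j')%N.
  by rewrite !prependS.
have -> : lift (lift ord0 k) ord0 = ord0 :> 'I_n.+2 by apply/val_inj.
by rewrite !prepend0.
Qed.

(* Evaluating [coboundary f = 0] at [prepend g y] isolates its first face [f y]. *)
Lemma cocycle_prepend (K : fieldType) (G : topGroupType) (E : lmodType K) n
    (f : ('I_n.+1 -> G) -> E) :
  coboundary f = (fun _ => 0) -> forall g y,
  \sum_(i < n.+1) ((-1) ^+ i : K) *: f (prepend g (fun j => y (lift i j))) = f y.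
Proof.
move=> f_cocycle g y; have /eqP := congr1 (fun F => F (prepend g y)) f_cocycle.
rewrite /coboundary big_ord_recl expr0 scale1r prepend_tail addr_eq0 => /eqP ->.
rewrite -sumrN; apply: eq_bigr => i _.
by rewrite prepend_face lift0 exprS mulN1r scaleNr opprK.
Qed.

Lemma nbhs_rmul (G : topGroupType) : topological_group G ->
  forall (x : G) (A : set G), nbhs 1%g A -> nbhs x [set y | A (y * x^-1)%g].
Proof.
case=> mul_cont _ x A A_nbhs.
have : (fun y : G => (y * x^-1)%g) @ x --> (x * x^-1)%g.
  apply: (cvg_comp (fun y : G => (y, x^-1)%g) (fun p : G * G => (p.1 * p.2)%g)).
    exact: cvg_pair cvg_id (cvg_cst _).
  exact: (mul_cont (x, x^-1)%g).
by rewrite mulgV => /(_ _ A_nbhs).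
Qed.

Section AveragedCone.
Variables (R : realType) (K : fieldType) (abs : K -> R) (G : topGroupType).
Variables (E : lmodType K) (nE : E -> R) (actE : G -> E -> E).
Variables (V : lmodType K) (nV : V -> R) (actV : G -> V -> V) (Phi : E -> V -> K).
Variables (m : (G -> K) -> K) (C : R).

Hypothesis abs_nonarch : nonarch_abs abs.
Hypothesis G_top : topological_group G.
Hypothesis nE_ge0 : forall e, 0 <= nE e.
Hypothesis nV_space : normed_space abs nV.
Hypothesis Phi_functional : forall e,
  lin_functional (Phi e) /\ bounded_functional abs nV (Phi e).
Hypothesis Phi_lin : forall (a : K) e e',
  Phi (a *: e + e') = (fun x => a * Phi e x + Phi e' x).
Hypothesis Phi_inj : injective Phi.
Hypothesis Phi_onto : forall l : V -> K,
  lin_functional l -> bounded_functional abs nV l -> exists e, Phi e = l.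
Hypothesis nE_opnorm : forall e, nE e = opnorm abs nV (Phi e).
Hypothesis Phi_act : forall g e, Phi (actE g e) = (fun x => Phi e (actV (g^-1)%g x)).
Hypothesis m_lin : forall (a : K) f h, Cb abs f -> Cb abs h ->
  m (fun x => a * f x + h x) = a * m f + m h.
Hypothesis m_bounded : forall f, Cb abs f -> abs (m f) <= C * supnorm abs f.
Hypothesis m1 : m (fun _ => 1) = 1.
Hypothesis m_inv : forall (g : G) f, Cb abs f -> m (fun x => f (g^-1 * x)%g) = m f.

Let nV_ge0 := normed_space_ge0 abs_nonarch nV_space.
Let C_ge0 := mean_bound_ge0 abs_nonarch m1 m_bounded.
Let m_le := mean_le abs_nonarch m1 m_bounded.

Lemma Phi_le e v : abs (Phi e v) <= nE e * nV v.
Proof. by rewrite nE_opnorm; apply: abs_le_opnorm => //; exact: (Phi_functional e).2. Qed.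

Lemma PhiB e e' v : Phi (e - e') v = Phi e v - Phi e' v.
Proof. by rewrite -[e - e']addrC -scaleN1r Phi_lin mulN1r addrC. Qed.

Lemma Phi0 v : Phi 0 v = 0.
Proof. by have := PhiB 0 0 v; rewrite !subrr. Qed.

Lemma Phi_sum k (c : 'I_k -> K) (e : 'I_k -> E) v :
  Phi (\sum_(i < k) c i *: e i) v = \sum_(i < k) c i * Phi (e i) v.
Proof.
elim: k c e => [|k IHk] c e; first by rewrite !big_ord0 Phi0.
by rewrite !big_ord_recl Phi_lin IHk.
Qed.

Section Cochain.
Variables (n : nat) (f : ('I_n.+2 -> G) -> E).
Hypothesis f_lucb : lucb nE f.

Definition cone_slice (z : 'I_n.+1 -> G) (v : V) : G -> K :=
  fun g => Phi (f (prepend g z)) v.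

Lemma cone_slice_Cb z v : Cb abs (cone_slice z v).
Proof.
have [[M f_le] f_luc] := f_lucb; split; last first.
  by exists (M * nV v) => g; apply: le_trans (Phi_le _ _) _; rewrite ler_wpM2r.
move=> x eps eps_gt0.
have [U [U_nbhs f_near]] := f_luc _ (div_succ_gt0 (nV_ge0 v) eps_gt0).
exists [set y | U ord0 (y * x^-1)%g]; split; first exact: nbhs_rmul.
move=> y Uy; pose u : 'I_n.+2 -> G := prepend (y * x^-1)%g (fun _ => 1%g).
have u_in_U : forall i, U i (u i).
  by apply: forall_prepend => // j; exact: nbhs_singleton.
have := f_near (prepend x z) u u_in_U.
rewrite (prepend_map2 (fun a b => (a * b)%g)) mulgVK.
rewrite (_ : (fun j => _) = z); last by apply: funext => j; rewrite mul1g.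
move=> f_diff_lt; rewrite /cone_slice (nonarch_absB abs_nonarch) -PhiB.
apply: le_lt_trans (Phi_le _ _) _; rewrite mulrC.
by apply: mulr_lt_div_succ => //; exact: ltW.
Qed.

Lemma cone_slice_near eps : 0 < eps ->
  exists U : 'I_n.+1 -> set G, (forall i, nbhs 1%g (U i)) /\
    forall x u, (forall i, U i (u i)) -> forall v g,
      abs (cone_slice x v g - cone_slice (fun i => u i * x i)%g v g) <= eps * nV v.
Proof.
move=> eps_gt0; have [_ f_luc] := f_lucb.
have [U [U_nbhs f_near]] := f_luc _ eps_gt0.
exists (fun i => U (lift ord0 i)); split => [i|x u u_in_U v g]; first exact: U_nbhs.
rewrite /cone_slice -PhiB; apply: le_trans (Phi_le _ _) _.
rewrite ler_wpM2r // ltW //.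
have := f_near (prepend g x) (prepend 1%g u).
rewrite (prepend_map2 (fun a b => (a * b)%g)) mul1g; apply.
by apply: forall_prepend => //; exact: nbhs_singleton.
Qed.

Lemma cone_functional_le M z v : (forall x, nE (f x) <= M) ->
  abs (m (cone_slice z v)) <= C * M * nV v.
Proof.
move=> f_le; rewrite -mulrA; apply: m_le (cone_slice_Cb z v) _ => g.
by apply: le_trans (Phi_le _ _) _; rewrite ler_wpM2r.
Qed.

Lemma cone_exists : exists h : ('I_n.+1 -> G) -> E,
  forall z, Phi (h z) = (fun v => m (cone_slice z v)).
Proof.
suff /choice[h h_def] : forall z, exists e, Phi e = (fun v => m (cone_slice z v)).
  by exists h.
move=> z; apply: Phi_onto.
  move=> a v w /=; rewrite -(m_lin _ (cone_slice_Cb _ _) (cone_slice_Cb _ _)).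
  apply: congr1; apply: funext => g.
  exact: (Phi_functional _).1.
have [[M f_le] _] := f_lucb.
by exists (C * M) => v; exact: cone_functional_le.
Qed.

Variable h : ('I_n.+1 -> G) -> E.
Hypothesis h_def : forall z, Phi (h z) = (fun v => m (cone_slice z v)).

Lemma cone_lucb : lucb nE h.
Proof.
have [[M f_le] _] := f_lucb; split.
  have M_ge0 : 0 <= M := le_trans (nE_ge0 _) (f_le (fun _ => 1%g)).
  exists (C * M) => z; rewrite nE_opnorm h_def.
  by apply: opnorm_le => [|v]; [rewrite mulr_ge0 | exact: cone_functional_le].
move=> eps eps_gt0; have eps'_gt0 := div_succ_gt0 C_ge0 eps_gt0.
have [U [U_nbhs slice_near]] := cone_slice_near eps'_gt0.
exists U; split => // x u u_in_U.
apply: le_lt_trans (mulr_lt_div_succ C_ge0 eps_gt0 (lexx _)).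
rewrite nE_opnorm; apply: opnorm_le => [|v]; first by rewrite mulr_ge0 // ltW.
rewrite PhiB !h_def -(meanB m_lin (cone_slice_Cb _ _) (cone_slice_Cb _ _)).
rewrite -mulrA.
by apply: m_le; [exact: Cb_sub (cone_slice_Cb _ _) (cone_slice_Cb _ _) | exact: slice_near].
Qed.

Lemma cone_invariant : G_invariant actE f -> G_invariant actE h.
Proof.
move=> f_inv k x; apply: Phi_inj; rewrite Phi_act !h_def; apply: funext => v /=.
have -> : cone_slice (fun i => k^-1 * x i)%g (actV k^-1%g v) =
          (fun g => cone_slice x v (k^-1^-1 * g)%g).
  apply: funext => g; rewrite invgK /cone_slice -[in RHS](f_inv k) Phi_act.
  by rewrite (prepend_map (fun a => (k^-1 * a)%g)) mulKg.
by rewrite (m_inv _ (cone_slice_Cb _ _)).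
Qed.

Lemma cone_coboundary : coboundary f = (fun _ => 0) -> coboundary h = f.
Proof.
move=> f_cocycle; apply: funext => y; apply: Phi_inj; apply: funext => v.
rewrite /coboundary Phi_sum; under eq_bigr do rewrite h_def /=.
rewrite -(mean_sum abs_nonarch m_lin) => [|i]; last exact: cone_slice_Cb.
rewrite -[RHS](mean_cst abs_nonarch m_lin m1); apply: congr1; apply: funext => g.
by rewrite /cone_slice -Phi_sum (cocycle_prepend f_cocycle).
Qed.

End Cochain.

Lemma dual_Hlucb_succ_vanishes n : Hlucb_succ_vanishes nE actE n.
Proof.
move=> f f_lucb f_inv f_cocycle; have [h h_def] := cone_exists f_lucb.
exists h; split.
- exact: (cone_lucb f_lucb h_def).
- exact: (cone_invariant f_lucb h_def).
- exact: (cone_coboundary f_lucb h_def).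
Qed.

End AveragedCone.

Theorem theorem7p4 (R : realType) (K : fieldType) (absK : K -> R)
    (G : topGroupType) (E : lmodType K) (nE : E -> R) (actE : G -> E -> E) :
  nonarch_abs absK ->
  topological_group G ->
  totally_disconnected [set: G] ->
  locally_compact [set: G] ->
  normed_amenable absK G ->
  normed_module absK nE actE ->
  dual_normed_module absK nE actE ->
  forall n : nat, (1 <= n)%N ->
    Hlucb_succ_vanishes nE actE n.-1.
Proof.
move=> abs_nonarch G_top _ _ [m [m_lin [C m_bounded] m1 m_inv]] [nE_space _ _ _ _].
move=> [V [nV [actV [Phi [[nV_space _ _ _ _] [Phi_functional [Phi_lin
  [Phi_inj [Phi_onto [nE_opnorm Phi_act]]]]]]]]]] n _.
exact: (dual_Hlucb_succ_vanishes abs_nonarch G_top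
  (normed_space_ge0 abs_nonarch nE_space) nV_space Phi_functional Phi_lin
  Phi_inj Phi_onto nE_opnorm Phi_act m_lin m_bounded m1 m_inv).
Qed.
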